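(* Let $E$ and $E'$ be disjunctive interval multiplicity expressions (DIMEs) over a finite alphabet $\Sigma$. Then $L(E')\subseteq L(E)$ if and only if $\Delta_{E'}\preccurlyeq \Delta_E$.
   Context: Unordered words are functions $w:\Sigma\to\mathbb{N}_0$; $a\in w$ means $w(a)\neq 0$; $\varepsilon$ is the all-zero word; unordered concatenation $\uplus$ is multiset union, extended to languages pointwise. An interval is $[n,m]$ or $[n,m]^?$ with $n\in\mathbb{N}_0$, $m\in\mathbb{N}_0\cup\{\infty\}$; $L(E^{[n,m]})=\{w_1\uplus\dots\uplus w_i\mid n\le i\le m, w_j\in L(E)\}$, $L(E^{[n,m]^?})=L(E^{[n,m]})\cup\{\varepsilon\}$; the multiplicities $*,+,?,1$ denote $[0,\infty],[1,\infty],[0,1],[1,1]$. Also $L(a)=\{a\}$, $L(E_1\mid E_2)=L(E_1)\cup L(E_2)$, $L(E_1\mathbin{|\hspace{-0.1em}|} E_2)=L(E_1)\uplus L(E_2)$. An atom is $(a_1^{I_1}\mathbin{|\hspace{-0.1em}|}\dots\mathbin{|\hspace{-0.1em}|} a_k^{I_k})$ with $a_i\in\Sigma$ and each $I_i\in\{?,1\}$. A clause is $(A_1^{I_1}\mid\dots\mid A_k^{I_k})$ with atoms $A_i$ and intervals $I_i$; it is simple if each $I_i\in\{?,1\}$. A DIME is $(D_1^{I_1}\mathbin{|\hspace{-0.1em}|}\dots\mathbin{|\hspace{-0.1em}|} D_k^{I_k})$ where for each $i$ either $D_i$ is a simple clause and $I_i\in\{+,*\}$, or $D_i$ is a clause and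 $I_i\in\{1,?\}$; moreover each symbol occurs at most once in the DIME. The characterizing tuple of a DIME $E$ is $\Delta_E=(C_E,N_E,P_E,K_E)$ where $C_E=\{(a,b)\in\Sigma\times\Sigma\mid \neg\exists w\in L(E).\ a\in w\wedge b\in w\}$, $N_E=\{(a,w(a))\mid a\in\Sigma, w\in L(E)\}$, $P_E=\{X\subseteq\Sigma\mid\forall w\in L(E).\ \exists a\in X.\ a\in w\}$, $K_E=\{(a,b)\in\Sigma\times\Sigma\mid\forall w\in L(E).\ w(a)\ge w(b)\}$. We write $\Delta_{E'}\preccurlyeq\Delta_E$ if $C_E\subseteq C_{E'}$, $N_{E'}\subseteq N_E$, $P_E\subseteq P_{E'}$ and $K_E\subseteq K_{E'}$. *)

From Stdlib Require List.
From mathcomp Require Import all_boot.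
Set Implicit Arguments. Unset Strict Implicit. Unset Printing Implicit Defensive.

Section DIME.
Variable S : finType.

(* unordered words: functions Sigma -> nat *)
Definition word := {ffun S -> nat}.
Definition eps : word := [ffun=> 0%N].
Definition wunion (w1 w2 : word) : word := [ffun a => w1 a + w2 a].
Definition wsym (a : S) : word := [ffun b => nat_of_bool (b == a)].

Definition lang := word -> Prop.
Definition lsym (a : S) : lang := fun w => w = wsym a.
Definition lunion (L1 L2 : lang) : lang :=
  fun w => exists w1 w2, L1 w1 /\ L2 w2 /\ w = wunion w1 w2.
Definition leps : lang := fun w => w = eps.

(* intervals [n,m] (hi = None means infinity), opt = true means [n,m]^? *)
Record interval := Itv { ilo : nat; ihi : option nat; iopt : bool }.
Definition in_itv (I : interval) (i : nat) : Prop :=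
  ilo I <= i /\ (match ihi I with Some m => i <= m | None => True end).
Definition itv_ok (I : interval) : Prop :=
  match ihi I with Some m => ilo I <= m | None => True end.

Inductive iterL (L : lang) : nat -> word -> Prop :=
| iterL0 : iterL L 0 eps
| iterLS i w1 w : L w1 -> iterL L i w -> iterL L i.+1 (wunion w1 w).

Definition lrep (L : lang) (I : interval) : lang :=
  fun w => (exists i, in_itv I i /\ iterL L i w) \/ (iopt I /\ w = eps).

Definition m_star : interval := Itv 0 None false.
Definition m_plus : interval := Itv 1 None false.
Definition m_qm   : interval := Itv 0 (Some 1%N) false.
Definition m_one  : interval := Itv 1 (Some 1%N) false.

(* syntax: atom = list of (symbol, is_optional) ; clause = list of (atom, interval);
   DIME = list of (clause, interval) *)
Definition atom := seq (S * bool).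
Definition clause := seq (atom * interval).
Definition dime := seq (clause * interval).

Definition lang_atom (A : atom) : lang :=
  foldr (fun p L => lunion (lrep (lsym p.1) (if p.2 then m_qm else m_one)) L) leps A.
Definition lang_clause (C : clause) : lang :=
  foldr (fun p L => fun w => lrep (lang_atom p.1) p.2 w \/ L w) (fun _ => False) C.
Definition lang_dime (E : dime) : lang :=
  foldr (fun p L => lunion (lrep (lang_clause p.1) p.2) L) leps E.

Definition clause_ok (C : clause) : Prop :=
  C <> [::] /\ forall p, List.In p C -> p.1 <> [::] /\ itv_ok p.2.
Definition simple_clause (C : clause) : Prop :=
  forall p, List.In p C -> p.2 = m_qm \/ p.2 = m_one.
Definition dime_symbols (E : dime) : seq S :=
  flatten (map (fun p => flatten (map (fun q => map fst q.1) p.1)) E).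
Definition is_dime (E : dime) : Prop :=
  E <> [::] /\
  (forall p, List.In p E ->
     clause_ok p.1 /\
     ((simple_clause p.1 /\ (p.2 = m_plus \/ p.2 = m_star)) \/
      (p.2 = m_one \/ p.2 = m_qm))) /\
  uniq (dime_symbols E).

Definition C_E (E : dime) (a b : S) : Prop :=
  ~ exists w, lang_dime E w /\ 0 < w a /\ 0 < w b.
Definition N_E (E : dime) (a : S) (n : nat) : Prop :=
  exists w, lang_dime E w /\ w a = n.
Definition P_E (E : dime) (X : {set S}) : Prop :=
  forall w, lang_dime E w -> exists a, a \in X /\ 0 < w a.
Definition K_E (E : dime) (a b : S) : Prop :=
  forall w, lang_dime E w -> w b <= w a.

Definition delta_le (E' E : dime) : Prop :=
  (forall a b, C_E E a b -> C_E E' a b) /\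
  (forall a n, N_E E' a n -> N_E E a n) /\
  (forall X, P_E E X -> P_E E' X) /\
  (forall a b, K_E E a b -> K_E E' a b).

End DIME.

From mathcomp Require Import all_boot zify.
From Stdlib Require Import Classical.
Set Implicit Arguments. Unset Strict Implicit. Unset Printing Implicit Defensive.

(* The implication from inclusion to [Delta_E' <= Delta_E] is monotonicity of
   the four components.  For the converse, say that a word [w] is consistent
   with a language [L] when [Delta_{w} <= Delta_L]: the counts of [w] occur in
   [L], two letters that never co-occur in [L] do not co-occur in [w], [w] meets
   every hitting set of [L], and [w] satisfies every inequality [u b <= u a]
   valid on [L].  Every word of [L(E')] is consistent with [L(E)], so it is
   enough to show that a word consistent with a DIME belongs to it.  The
   factors of a DIME use pairwise disjoint letters, so consistency passes to
   the restriction of [w] to the letters of each factor.  For a factor with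
   multiplicity [1] or [?], the co-occurrence condition confines [w] to a single
   atom, the inequalities force all required letters of that atom to a common
   count [k] dominating the other counts (without required letters, take [k]
   the largest count), and the realised counts place [k] in the interval of
   the atom.  For a simple clause under [+] or [*], the same inequalities show
   that the restriction of [w] to each atom is a repetition of that atom, and
   these repetitions add up. *)

Section DimeLanguages.
Variable S : finType.
Implicit Types (x a b : S) (w u v : word S) (L : lang S) (P : pred S).

Lemma wunionE w1 w2 x : wunion w1 w2 x = w1 x + w2 x.
Proof. by rewrite ffunE. Qed.

Lemma epsE x : eps S x = 0.
Proof. by rewrite ffunE. Qed.

Lemma wsymE a x : wsym a x = (x == a).
Proof. by rewrite ffunE. Qed.

Lemma wunion0w w : wunion (eps S) w = w.
Proof. by apply/ffunP => x; rewrite wunionE epsE. Qed.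

Lemma wunionw0 w : wunion w (eps S) = w.
Proof. by apply/ffunP => x; rewrite wunionE epsE addn0. Qed.

Lemma wunionA w1 w2 w3 : wunion (wunion w1 w2) w3 = wunion w1 (wunion w2 w3).
Proof. by apply/ffunP => x; rewrite !wunionE addnA. Qed.

Lemma wunionC w1 w2 : wunion w1 w2 = wunion w2 w1.
Proof. by apply/ffunP => x; rewrite !wunionE addnC. Qed.

Lemma pos_of_neq_eps w : w != eps S -> exists a, 0 < w a.
Proof.
case: (pickP (fun a => 0 < w a)) => [a wa _|w0]; first by exists a.
by case/eqP; apply/ffunP => x; rewrite epsE; move: (w0 x) => /= /negbT; lia.
Qed.

Lemma lunionC L1 L2 u : lunion L1 L2 u -> lunion L2 L1 u.
Proof. by case=> [v1 [v2 [L1v1 [L2v2 ->]]]]; exists v2, v1; rewrite wunionC. Qed.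

Lemma iterL0_eps L w : iterL L 0 w -> w = eps S.
Proof. by move=> H; inversion H. Qed.

Lemma iterLS_inv L i w : iterL L i.+1 w ->
  exists w1 w2, L w1 /\ iterL L i w2 /\ w = wunion w1 w2.
Proof. by move=> H; inversion H; subst; exists w1, w0. Qed.

Lemma iterL1 L w : L w -> iterL L 1 w.
Proof. by move=> Lw; rewrite -(wunionw0 w); apply: iterLS => //; apply: iterL0. Qed.

Lemma iterL_cat L i j u v : iterL L i u -> iterL L j v -> iterL L (i + j) (wunion u v).
Proof.
elim=> [|k u1 u2 Lu1 _ IH] Lv; first by rewrite add0n wunion0w.
by rewrite addSn wunionA; apply: iterLS => //; apply: IH.
Qed.

Lemma iterL_mono L L' i w : (forall u, L u -> L' u) -> iterL L i w -> iterL L' i w.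
Proof.
by move=> LL'; elim=> [|k u1 u2 Lu1 _ IH]; [apply: iterL0|apply: iterLS (LL' _ Lu1) IH].
Qed.

Lemma iterL_closed L (Q : word S -> Prop) i w :
  Q (eps S) -> (forall u v, Q u -> Q v -> Q (wunion u v)) ->
  (forall u, L u -> Q u) -> iterL L i w -> Q w.
Proof. by move=> Q0 QU LQ; elim=> // k u1 u2 Lu1 _; apply: QU (LQ _ Lu1). Qed.

Lemma lrep_closed L (Q : word S -> Prop) I w :
  Q (eps S) -> (forall u v, Q u -> Q v -> Q (wunion u v)) ->
  (forall u, L u -> Q u) -> lrep L I w -> Q w.
Proof. by move=> Q0 QU LQ [[i [_ /(iterL_closed Q0 QU LQ)]]|[_ ->]]. Qed.

Lemma lrep_oneP L w : lrep L m_one w <-> L w.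
Proof.
split; last by move=> Lw; left; exists 1; split; [|apply: iterL1].
case=> [[i [[/= i1 i1'] Li]]|[//]].
move: Li; have -> : i = 1 by lia.
by case/iterLS_inv => w1 [w2 [Lw1 [/iterL0_eps -> ->]]]; rewrite wunionw0.
Qed.

Lemma lrep_qmP L w : lrep L m_qm w <-> w = eps S \/ L w.
Proof.
split=> [|[->|Lw]]; last 2 first.
- by left; exists 0; split; [|apply: iterL0].
- by left; exists 1; split; [|apply: iterL1].
case=> [[i [[_ /= i1] Li]]|[//]].
case: i i1 Li => [_ /iterL0_eps|[|//] _ /iterLS_inv [w1 [w2 [Lw1 [/iterL0_eps -> ->]]]]].
  by left.
by right; rewrite wunionw0.
Qed.

Lemma lrep_nonempty L I : itv_ok I -> (exists u, L u) -> exists w, lrep L I w.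
Proof.
move=> okI [u Lu].
have [w Lw] : exists w, iterL L (ilo I) w.
  elim: (ilo I) => [|n [w Lw]]; first by exists (eps S); apply: iterL0.
  by exists (wunion u w); apply: iterLS.
by exists w; left; exists (ilo I).
Qed.

Definition supported L P := forall u, L u -> forall x, ~~ P x -> u x = 0.

Lemma supported_lrep L I P : supported L P -> supported (lrep L I) P.
Proof.
move=> suppL u; apply: (lrep_closed (Q := fun u => forall x, ~~ P x -> u x = 0)).
- by move=> x _; rewrite epsE.
- by move=> u1 u2 H1 H2 x Px; rewrite wunionE H1 ?H2.
- exact: suppL.
Qed.

Lemma supported_weaken L P (Q : pred S) :
  supported L P -> (forall x, P x -> Q x) -> supported L Q.
Proof. by move=> suppL PQ u Lu x Qx; apply: suppL => //; apply: contra Qx; apply: PQ. Qed.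

Definition wrestr P w : word S := [ffun x => if P x then w x else 0].

Lemma wrestr_split P w : w = wunion (wrestr P w) (wrestr (predC P) w).
Proof. by apply/ffunP => x; rewrite wunionE !ffunE /=; case: (P x); rewrite ?addn0. Qed.

Lemma wrestr_id P w : (forall x, ~~ P x -> w x = 0) -> wrestr P w = w.
Proof. by move=> w0; apply/ffunP => x; rewrite ffunE; case: ifPn => // /w0. Qed.

Lemma wrestr_cat (s1 s2 : seq S) w : ~~ has (mem s1) s2 ->
  wrestr (mem (s1 ++ s2)) w = wunion (wrestr (mem s1) w) (wrestr (mem s2) w).
Proof.
move=> dis; apply/ffunP => x; rewrite wunionE !ffunE /= mem_cat.
case: (boolP (x \in s1)) => [x1|_]; last by rewrite add0n.
have x2 : x \notin s2 by apply: contraNN dis => x2; apply/hasP; exists x.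
by rewrite (negbTE x2) addn0.
Qed.

Definition atom_syms (A : atom S) : seq S := map fst A.
Definition atom_req (A : atom S) x : bool := (x, false) \in A.

Lemma atom_req_syms A x : atom_req A x -> x \in atom_syms A.
Proof. exact: map_f. Qed.

Lemma lrep_lsymP a (opt : bool) w :
  lrep (lsym a) (if opt then m_qm else m_one) w <->
  (forall x, ((x == a) && ~~ opt) <= w x <= (x == a)).
Proof.
split.
- case: opt => [/lrep_qmP [->|->]|/lrep_oneP ->] x;
    by rewrite ?epsE ?wsymE ?andbT ?andbF; case: (x == a).
- move=> wa; have w0 x : x != a -> w x = 0.
    by move=> /negbTE xa; move: (wa x); rewrite xa /=; lia.
  move: (wa a); rewrite eqxx /=; case: opt {wa} => wa_le.
  + apply/lrep_qmP; case: (posnP (w a)) => [wa0|wa_pos]; [left|right];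
      apply/ffunP => x; rewrite ?epsE ?wsymE; case: (eqVneq x a) => [->|/w0] //; lia.
  + apply/lrep_oneP; apply/ffunP => x; rewrite wsymE.
    case: (eqVneq x a) => [->|/w0 ->] //; lia.
Qed.

Lemma lang_atomP (A : atom S) w : uniq (atom_syms A) ->
  lang_atom A w <-> forall x, atom_req A x <= w x <= (x \in atom_syms A).
Proof.
elim: A w => [|[a opt] A IH] w.
  move=> _; split=> [-> x|w0]; first by rewrite epsE.
  by apply/ffunP => x; rewrite epsE; move: (w0 x); rewrite /atom_req /atom_syms /=; lia.
rewrite /atom_syms /= -/(atom_syms A) => /andP[aA uA].
have reqE x : atom_req ((a, opt) :: A) x = ((x == a) && ~~ opt) || atom_req A x.
  by rewrite /atom_req in_cons xpair_eqE; case: opt.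
have symsE x : (x \in a :: atom_syms A) = (x == a) || (x \in atom_syms A).
  exact: in_cons.
have reqA : atom_req A a = false by apply/negbTE; apply: contra aA; apply: atom_req_syms.
rewrite -/(lang_atom A); split.
- case=> [w1 [w2 [/lrep_lsymP w1a [/(IH _ uA) w2A ->]]]] x.
  rewrite wunionE reqE symsE; move: (w1a x) (w2A x).
  case: (eqVneq x a) => [->|_] /=; rewrite ?reqA ?(negbTE aA) ?orbF.
    by case: opt {reqE w1a} => /=; lia.
  by case: (atom_req A x); case: (x \in atom_syms A) => /=; lia.
- move=> wA; exists (wrestr (pred1 a) w), (wrestr (predC (pred1 a)) w).
  split; [|split; last exact: wrestr_split].
  + apply/lrep_lsymP => x; rewrite ffunE /=; move: (wA x); rewrite reqE symsE.
    by case: (eqVneq x a) => [->|_] /=; rewrite ?reqA ?(negbTE aA) ?orbF.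
  + apply/(IH _ uA) => x; rewrite ffunE /=; move: (wA x); rewrite reqE symsE.
    by case: (eqVneq x a) => [->|_] /=; rewrite ?reqA ?(negbTE aA) ?orbF.
Qed.

Lemma iter_atomP (A : atom S) i w : uniq (atom_syms A) ->
  iterL (lang_atom A) i w <-> forall x, i * atom_req A x <= w x <= i * (x \in atom_syms A).
Proof.
move=> uA; split.
  elim=> [|k w1 w2 /(lang_atomP _ uA) w1A _ IH] x; first by rewrite epsE; lia.
  rewrite wunionE; move: (w1A x) (IH x) (@atom_req_syms A x).
  by case: (atom_req A x); case: (x \in atom_syms A) => //=; lia.
elim: i w => [|i IH] w wA.
  rewrite (_ : w = eps S); first exact: iterL0.
  by apply/ffunP => x; rewrite epsE; move: (wA x); lia.
have -> : w = wunion [ffun x => minn (w x) 1] [ffun x => w x - minn (w x) 1].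
  by apply/ffunP => x; rewrite wunionE !ffunE; lia.
apply: iterLS.
  apply/(lang_atomP _ uA) => x; rewrite ffunE; move: (wA x) (@atom_req_syms A x).
  by case: (atom_req A x); case: (x \in atom_syms A) => //=; lia.
apply: IH => x; rewrite ffunE; move: (wA x) (@atom_req_syms A x).
by case: (atom_req A x); case: (x \in atom_syms A) => //=; lia.
Qed.

Lemma atom_nonempty (A : atom S) : uniq (atom_syms A) -> exists u, lang_atom A u.
Proof.
move=> uA; exists [ffun x => nat_of_bool (atom_req A x)]; apply/(lang_atomP _ uA) => x.
by rewrite ffunE leqnn; case: (boolP (atom_req A x)) => // /atom_req_syms ->.
Qed.

Lemma supported_atom (A : atom S) : uniq (atom_syms A) ->
  supported (lang_atom A) (mem (atom_syms A)).
Proof.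
by move=> uA u /(lang_atomP _ uA) uA' x /= xA; move: (uA' x); rewrite (negbTE xA); lia.
Qed.

Lemma lrep_atom_count (A : atom S) J u x : uniq (atom_syms A) ->
  lrep (lang_atom A) J u -> 0 < u x ->
  exists i, in_itv J i /\ forall y, i * atom_req A y <= u y <= i * (y \in atom_syms A).
Proof.
move=> uA [[i [Ji /(iter_atomP _ _ uA) ui]] _|[_ ->]]; first by exists i.
by rewrite epsE.
Qed.

Lemma lrep_atom_le_req (A : atom S) J u x r : uniq (atom_syms A) ->
  x \in atom_syms A -> atom_req A r -> lrep (lang_atom A) J u -> u x <= u r.
Proof.
move=> uA xA rA; apply: (lrep_closed (Q := fun u => u x <= u r)).
- by rewrite !epsE.
- by move=> u1 u2; rewrite !wunionE; lia.
- by move=> v /(lang_atomP _ uA) vA; move: (vA x) (vA r); rewrite xA rA; lia.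
Qed.

Lemma iter_atom_build (A : atom S) k v : uniq (atom_syms A) ->
  (forall x, x \notin atom_syms A -> v x = 0) ->
  (forall x, x \in atom_syms A -> v x <= k) ->
  (forall x, atom_req A x -> v x = k) -> iterL (lang_atom A) k v.
Proof.
move=> uA v0 vle vreq; apply/(iter_atomP _ _ uA) => x.
case: (boolP (atom_req A x)) => [xr|_].
  by rewrite (atom_req_syms xr) vreq //= muln1 leqnn.
by case: (boolP (x \in atom_syms A)) => [/vle|/v0 ->] /=; rewrite ?muln0 ?muln1.
Qed.

Section FlattenMap.
Variables (T : Type) (f : T -> seq S).

Lemma in_flatten_map (s : seq T) x :
  x \in flatten (map f s) <-> exists2 p, List.In p s & x \in f p.
Proof.
elim: s => [|p s IH] /=; first by split=> // [[]].
rewrite mem_cat; split.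
- by case/orP=> [xp|/IH [q sq xq]]; [exists p; [left|]|exists q; [right|]].
- by case=> q [<-|sq] xq; [rewrite xq|apply/orP; right; apply/IH; exists q].
Qed.

Lemma uniq_flatten_map_In (s : seq T) p :
  uniq (flatten (map f s)) -> List.In p s -> uniq (f p).
Proof.
elim: s => [|q s IH] //=; rewrite cat_uniq => /and3P[uq _ us] [<-|sp] //.
exact: IH.
Qed.

Lemma uniq_flatten_map_In_inj (s : seq T) p q x :
  uniq (flatten (map f s)) -> List.In p s -> List.In q s ->
  x \in f p -> x \in f q -> p = q.
Proof.
elim: s => [|r s IH] //=; rewrite cat_uniq => /and3P[_ dis us].
have notin p' : List.In p' s -> x \in f r -> x \in f p' -> False.
  move=> sp' xr xp'; case/negP: dis; apply/hasP; exists x => //.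
  by apply/in_flatten_map; exists p'.
case=> [<-|sp] [<-|sq] xp xq //; first by case: (notin q sq xp xq).
  by case: (notin p sp xq xp).
exact: IH.
Qed.

End FlattenMap.

Definition clause_syms (D : clause S) : seq S :=
  flatten (map (fun q => atom_syms q.1) D).

Lemma clause_syms_cons q (D : clause S) :
  clause_syms (q :: D) = atom_syms q.1 ++ clause_syms D.
Proof. by []. Qed.

Lemma lang_clauseP (D : clause S) w :
  lang_clause D w <-> exists2 q, List.In q D & lrep (lang_atom q.1) q.2 w.
Proof.
elim: D => [|q D IH] /=; first by split=> // [[]].
split.
- by case=> [qw|/IH [q' Dq' q'w]]; [exists q; [left|]|exists q'; [right|]].
- by case=> q' [<-|Dq'] q'w; [left|right; apply/IH; exists q'].
Qed.

Lemma supported_clause (D : clause S) : uniq (clause_syms D) ->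
  supported (lang_clause D) (mem (clause_syms D)).
Proof.
move=> uD u /lang_clauseP [q Dq qu] x xD.
apply: (supported_lrep (supported_atom (uniq_flatten_map_In uD Dq)) qu).
by apply: contra xD => xq; apply/in_flatten_map; exists q.
Qed.

Lemma lang_clause_atom (D : clause S) q u x : uniq (clause_syms D) -> List.In q D ->
  lang_clause D u -> x \in atom_syms q.1 -> 0 < u x -> lrep (lang_atom q.1) q.2 u.
Proof.
move=> uD Dq /lang_clauseP [q' Dq' q'u] xq ux.
have xq' : x \in atom_syms q'.1.
  apply: contraLR ux => xq'; rewrite -leqNgt leqn0; apply/eqP.
  exact: (supported_lrep (supported_atom (uniq_flatten_map_In uD Dq')) q'u).
by rewrite (uniq_flatten_map_In_inj uD Dq Dq' xq xq').
Qed.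

Lemma lang_clause_le_req (D : clause S) q x r v : uniq (clause_syms D) -> List.In q D ->
  x \in atom_syms q.1 -> atom_req q.1 r -> lang_clause D v -> v x <= v r.
Proof.
move=> uD Dq xq rq Dv; case: (posnP (v x)) => [-> //|vx].
exact: lrep_atom_le_req (uniq_flatten_map_In uD Dq) xq rq (lang_clause_atom uD Dq Dv xq vx).
Qed.

Definition consistent L w : Prop :=
  [/\ forall a, exists u, L u /\ u a = w a,
      forall a b, ~ (exists u, L u /\ 0 < u a /\ 0 < u b) -> ~ (0 < w a /\ 0 < w b),
      forall X : {set S}, (forall u, L u -> exists a, a \in X /\ 0 < u a) ->
        exists a, a \in X /\ 0 < w a &
      forall a b, (forall u, L u -> u b <= u a) -> w b <= w a].

Lemma consistent_ext L L' w : (forall u, L u <-> L' u) -> consistent L w -> consistent L' w.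
Proof.
move=> LL' [wN wC wP wK]; split.
- by move=> a; have [u [/LL' L'u ua]] := wN a; exists u.
- by move=> a b noab; apply: wC => -[u [/LL' L'u ab]]; apply: noab; exists u.
- by move=> X X1; apply: wP => u /LL'; apply: X1.
- by move=> a b ab; apply: wK => u /LL'; apply: ab.
Qed.

Lemma consistent_supported L P w : consistent L w -> supported L P ->
  forall x, ~~ P x -> w x = 0.
Proof. by case=> wN _ _ _ suppL x Px; have [u [Lu <-]] := wN x; apply: suppL. Qed.

Lemma consistent_eps L : consistent L (eps S) -> L (eps S).
Proof.
case=> _ _ wP _; apply: NNPP => notL0.
have [a [_]] : exists a, a \in [set: S] /\ 0 < eps S a.
  apply: wP => u Lu.
  have [a ua] : exists a, 0 < u a.
    by apply: pos_of_neq_eps; apply/eqP => u0; apply: notL0; rewrite -u0.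
  by exists a; rewrite in_setT.
by rewrite epsE.
Qed.

Lemma consistent_lunionl L1 L2 P w :
  supported L1 P -> supported L2 (predC P) -> (exists u, L1 u) ->
  consistent (lunion L1 L2) w -> consistent L1 (wrestr P w).
Proof.
move=> supp1 supp2 [u1 L1u1] [wN wC wP wK].
have v2P v2 x : L2 v2 -> P x -> v2 x = 0.
  by move=> L2v2 Px; apply: supp2 => //=; rewrite Px.
split.
- move=> a; rewrite ffunE; case: (boolP (P a)) => Pa; last first.
    by exists u1; split; [|apply: supp1].
  have [_ [[v1 [v2 [L1v1 [L2v2 ->]]]] <-]] := wN a.
  by exists v1; rewrite wunionE (v2P v2 a L2v2 Pa) addn0.
- move=> a b noab; rewrite !ffunE.
  case: (boolP (P a)) => Pa; case: (boolP (P b)) => Pb; try lia.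
  apply: wC => -[_ [[v1 [v2 [L1v1 [L2v2 ->]]]]]].
  rewrite !wunionE (v2P v2 a L2v2 Pa) (v2P v2 b L2v2 Pb) !addn0 => ab.
  by apply: noab; exists v1.
- move=> X X1.
  have [a [aXP wa]] : exists a, a \in [set x in X | P x] /\ 0 < w a.
    apply: wP => _ [v1 [v2 [L1v1 [L2v2 ->]]]].
    have [a [aX v1a]] := X1 v1 L1v1.
    have Pa : P a by apply: contraLR v1a => /(supp1 _ L1v1) ->.
    by exists a; rewrite inE aX Pa wunionE; split => //; lia.
  by move: aXP; rewrite inE => /andP[aX Pa]; exists a; rewrite ffunE Pa.
- move=> a b ab; rewrite !ffunE; case: (boolP (P b)) => Pb //.
  case: (boolP (P a)) => Pa.
    apply: wK => _ [v1 [v2 [L1v1 [L2v2 ->]]]].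
    by rewrite !wunionE (v2P v2 a L2v2 Pa) (v2P v2 b L2v2 Pb) !addn0; apply: ab.
  have [_ [[v1 [v2 [L1v1 [L2v2 ->]]]] <-]] := wN b.
  rewrite wunionE (v2P v2 b L2v2 Pb) addn0.
  by move: (ab v1 L1v1); rewrite (supp1 _ L1v1 a Pa).
Qed.

Lemma consistent_lunion L1 L2 P w :
  supported L1 P -> supported L2 (predC P) -> (exists u, L1 u) -> (exists u, L2 u) ->
  consistent (lunion L1 L2) w ->
  consistent L1 (wrestr P w) /\ consistent L2 (wrestr (predC P) w).
Proof.
move=> supp1 supp2 ne1 ne2 wc; split; first exact: consistent_lunionl wc.
apply: (@consistent_lunionl L2 L1 (predC P)) supp2 _ ne2 _.
  by move=> u Lu x /=; rewrite negbK; apply: supp1.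
by apply: consistent_ext wc => u; split; apply: lunionC.
Qed.

Lemma consistent_lrep_atom L (A : atom S) J w a : uniq (atom_syms A) -> itv_ok J ->
  (forall u x, L u -> x \in atom_syms A -> 0 < u x -> lrep (lang_atom A) J u) ->
  consistent L w -> (forall x, x \notin atom_syms A -> w x = 0) ->
  a \in atom_syms A -> 0 < w a -> lrep (lang_atom A) J w.
Proof.
move=> uA okJ LA [wN _ _ wK] w0 aA wa.
have wle x r : x \in atom_syms A -> atom_req A r -> w x <= w r.
  move=> xA rA; apply: wK => u Lu; case: (posnP (u x)) => [-> //|ux].
  exact: lrep_atom_le_req uA xA rA (LA _ _ Lu xA ux).
have wcount x : 0 < w x ->
    exists i, in_itv J i /\ i * atom_req A x <= w x <= i * (x \in atom_syms A).
  move=> wx; have [u [Lu ux]] := wN x; rewrite -ux in wx *.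
  have xA : x \in atom_syms A by apply: contraLR wx => /w0; rewrite -ux => ->.
  by have [i [Ji ui]] := lrep_atom_count uA (LA _ _ Lu xA wx) wx; exists i.
left; case: (pickP (atom_req A)) => [r rA|noreq].
- have wr : 0 < w r by have := wle _ _ aA rA; lia.
  have [i [Ji]] := wcount r wr; rewrite rA atom_req_syms //= muln1 => ri.
  exists (w r); split; first by rewrite (_ : w r = i) //; lia.
  apply: iter_atom_build => // [x /wle|x xr]; first exact.
  by apply/eqP; rewrite eqn_leq !wle ?atom_req_syms.
- exists (maxn (ilo J) (\max_(x : S) w x)); split; last first.
    apply: iter_atom_build => // [x _|x]; last by rewrite noreq.
    exact: leq_trans (leq_bigmax x) (leq_maxr _ _).
  split; first exact: leq_maxl.
  case hiJ: (ihi J) => [m|//]; move: okJ; rewrite /itv_ok hiJ => lom.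
  rewrite geq_max lom; apply/bigmax_leqP => x _; case: (posnP (w x)) => [-> //|wx].
  have [i [[_]]] := wcount x wx; rewrite hiJ noreq muln0 => im /andP[_].
  by case: (x \in atom_syms A); rewrite /= ?muln1 ?muln0; lia.
Qed.

Lemma consistent_clause_single L (D : clause S) w :
  uniq (clause_syms D) -> clause_ok D ->
  (forall u, L u -> u = eps S \/ lang_clause D u) ->
  consistent L w -> w != eps S -> lang_clause D w.
Proof.
move=> uD [_ okD] Lcl wc wne.
have Lcl' u x : L u -> 0 < u x -> lang_clause D u by move=> /Lcl [->|//]; rewrite epsE.
have [a wa] := pos_of_neq_eps wne.
case: (wc) => wN wC _ _; have [u [Lu ua]] := wN a.
have {}ua : 0 < u a by rewrite ua.
case/lang_clauseP: (Lcl' _ _ Lu ua) => q Dq qu.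
have uq := uniq_flatten_map_In uD Dq.
have aq : a \in atom_syms q.1.
  apply: contraLR ua => aq; rewrite -leqNgt leqn0; apply/eqP.
  exact: (supported_lrep (supported_atom uq) qu).
have Lq u' x : L u' -> x \in atom_syms q.1 -> 0 < u' x -> lrep (lang_atom q.1) q.2 u'.
  by move=> Lu' xq u'x; apply: lang_clause_atom uD Dq (Lcl' _ _ Lu' u'x) xq u'x.
have w0 b : b \notin atom_syms q.1 -> w b = 0.
  move=> bq; apply/eqP; rewrite -leqn0 leqNgt; apply/negP => wb.
  have : ~ (0 < w a /\ 0 < w b).
    apply: wC => -[u' [Lu' [u'a u'b]]]; move: u'b.
    by rewrite (supported_lrep (supported_atom uq) (Lq _ _ Lu' aq u'a) bq).
  by move/(_ (conj wa wb)).
apply/lang_clauseP; exists q => //.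
have [_ okq] := okD q Dq.
exact: consistent_lrep_atom uq okq Lq wc w0 aq wa.
Qed.

Lemma consistent_lrep_clause_single (D : clause S) I w :
  uniq (clause_syms D) -> clause_ok D -> (I = m_one \/ I = m_qm) ->
  consistent (lrep (lang_clause D) I) w -> lrep (lang_clause D) I w.
Proof.
move=> uD okD I1 wc.
have Lcl u : lrep (lang_clause D) I u -> u = eps S \/ lang_clause D u.
  by case: I1 => ->; [move/lrep_oneP; right|move/lrep_qmP].
have clL u : lang_clause D u -> lrep (lang_clause D) I u.
  by case: I1 => -> Du; [apply/lrep_oneP|apply/lrep_qmP; right].
case: (eqVneq w (eps S)) wc => [->|wne] wc; first exact: consistent_eps.
exact/clL/(consistent_clause_single uD okD Lcl wc wne).
Qed.

Lemma iter_atom_wrestr (A : atom S) w : uniq (atom_syms A) ->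
  (forall x r, x \in atom_syms A -> atom_req A r -> w x <= w r) ->
  exists k, iterL (lang_atom A) k (wrestr (mem (atom_syms A)) w).
Proof.
move=> uA wle; set v := wrestr _ w.
have v0 x : x \notin atom_syms A -> v x = 0 by move=> xA; rewrite ffunE /= (negbTE xA).
have v1 x : x \in atom_syms A -> v x = w x by move=> xA; rewrite ffunE /= xA.
case: (pickP (atom_req A)) => [r rA|noreq].
- have rA' := atom_req_syms rA.
  exists (v r); apply: iter_atom_build => // [x xA|x xr].
    by rewrite !v1 //; apply: wle.
  have xA := atom_req_syms xr.
  by rewrite !v1 //; apply/eqP; rewrite eqn_leq !wle.
- exists (\max_(x : S) v x); apply: iter_atom_build => // x; last by rewrite noreq.
  by move=> _; apply: leq_bigmax.
Qed.

Lemma iterL_wrestr_clause_syms L (D : clause S) w : uniq (clause_syms D) ->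
  (forall q u, List.In q D -> lang_atom q.1 u -> L u) ->
  (forall q, List.In q D -> forall x r, x \in atom_syms q.1 -> atom_req q.1 r -> w x <= w r) ->
  exists k, iterL L k (wrestr (mem (clause_syms D)) w).
Proof.
elim: D => [|q D IH].
  move=> _ _ _; exists 0; rewrite (_ : wrestr _ w = eps S); first exact: iterL0.
  by apply/ffunP => x; rewrite !ffunE.
rewrite clause_syms_cons cat_uniq => /and3P[uq dis uD] atomL wle.
have [k1 k1w] := iter_atom_wrestr uq (wle q (or_introl erefl)).
have [k2 k2w] := IH uD (fun q' u Dq' => atomL q' u (or_intror Dq'))
  (fun q' Dq' => wle q' (or_intror Dq')).
exists (k1 + k2); rewrite wrestr_cat //; apply: iterL_cat k2w.
exact: iterL_mono (fun u => atomL q u (or_introl erefl)) k1w.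
Qed.

Lemma consistent_lrep_clause_iter (D : clause S) I w :
  uniq (clause_syms D) -> simple_clause D -> (I = m_plus \/ I = m_star) ->
  consistent (lrep (lang_clause D) I) w -> lrep (lang_clause D) I w.
Proof.
move=> uD sD I1 wc.
case: (eqVneq w (eps S)) wc => [->|wne] wc; first exact: consistent_eps.
have atomD q u : List.In q D -> lang_atom q.1 u -> lang_clause D u.
  move=> Dq qu; apply/lang_clauseP; exists q => //.
  by case: (sD q Dq) => ->; [apply/lrep_qmP; right|apply/lrep_oneP].
have wle q : List.In q D -> forall x r, x \in atom_syms q.1 -> atom_req q.1 r -> w x <= w r.
  move=> Dq x r xq rq; case: wc => _ _ _; apply=> u.
  apply: (lrep_closed (Q := fun u => u x <= u r)); first by rewrite !epsE.
    by move=> u1 u2; rewrite !wunionE; lia.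
  by move=> v; apply: lang_clause_le_req uD Dq xq rq.
have [k kw] := iterL_wrestr_clause_syms uD atomD wle.
have w0 := consistent_supported wc (supported_lrep (I := I) (supported_clause uD)).
rewrite (wrestr_id w0) in kw.
have k0 : 0 < k by case: k kw => // /iterL0_eps w_eps; rewrite w_eps eqxx in wne.
by left; exists k; split => //; rewrite /in_itv; case: I1 => ->.
Qed.

Definition dime_factor_ok (p : clause S * interval) : Prop :=
  clause_ok p.1 /\
  ((simple_clause p.1 /\ (p.2 = m_plus \/ p.2 = m_star)) \/ (p.2 = m_one \/ p.2 = m_qm)).

Lemma consistent_factor p w : uniq (clause_syms p.1) -> dime_factor_ok p ->
  consistent (lrep (lang_clause p.1) p.2) w -> lrep (lang_clause p.1) p.2 w.
Proof.
move=> up [okp [[sp p2]|p2]];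
  [exact: consistent_lrep_clause_iter|exact: consistent_lrep_clause_single].
Qed.

Lemma factor_nonempty p : uniq (clause_syms p.1) -> dime_factor_ok p ->
  exists u, lrep (lang_clause p.1) p.2 u.
Proof.
move=> up [[D0 okD] okI]; apply: lrep_nonempty.
  by case: okI => [[_ [->|->]]|[->|->]].
case: p.1 D0 okD up => [/(_ erefl) []|q D _ okD uD].
have [_ okq] := okD q (or_introl erefl).
have [u qu] := lrep_nonempty okq (atom_nonempty (uniq_flatten_map_In uD (or_introl erefl))).
by exists u; apply/lang_clauseP; exists q => //; left.
Qed.

Lemma dime_symbols_cons p (E : dime S) :
  dime_symbols (p :: E) = clause_syms p.1 ++ dime_symbols E.
Proof. by []. Qed.

Lemma supported_dime (E : dime S) : uniq (dime_symbols E) ->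
  supported (lang_dime E) (mem (dime_symbols E)).
Proof.
elim: E => [_ u -> x _|p E IH]; first exact: epsE.
rewrite dime_symbols_cons cat_uniq => /and3P[up _ uE] _ [u1 [u2 [pu1 [Eu2 ->]]]] x /=.
rewrite mem_cat negb_or => /andP[xp xE].
by rewrite wunionE (IH uE _ Eu2 x xE) addn0 (supported_lrep (supported_clause up) pu1 xp).
Qed.

Lemma dime_nonempty (E : dime S) : uniq (dime_symbols E) ->
  (forall p, List.In p E -> dime_factor_ok p) -> exists u, lang_dime E u.
Proof.
elim: E => [|p E IH]; first by exists (eps S).
rewrite dime_symbols_cons cat_uniq => /and3P[up _ uE] okE.
have [u1 pu1] := factor_nonempty up (okE p (or_introl erefl)).
have [u2 Eu2] := IH uE (fun q Eq => okE q (or_intror Eq)).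
by exists (wunion u1 u2), u1, u2.
Qed.

Lemma consistent_dime (E : dime S) w : uniq (dime_symbols E) ->
  (forall p, List.In p E -> dime_factor_ok p) ->
  consistent (lang_dime E) w -> lang_dime E w.
Proof.
elim: E w => [|p E IH] w.
  move=> _ _ [wN _ _ _]; apply/ffunP => x; rewrite epsE.
  by have [u [-> <-]] := wN x; rewrite epsE.
rewrite dime_symbols_cons cat_uniq => /and3P[up dis uE] okE wc.
have okp := okE p (or_introl erefl).
have okE' q : List.In q E -> dime_factor_ok q by move=> Eq; apply: okE; right.
have suppE : supported (lang_dime E) (predC (mem (clause_syms p.1))).
  apply: supported_weaken (supported_dime uE) _ => x xE /=.
  by apply: contraNN dis => xp; apply/hasP; exists x.
have [wc1 wc2] := consistent_lunion (supported_lrep (I := p.2) (supported_clause up)) suppE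
  (factor_nonempty up okp) (dime_nonempty uE okE') wc.
exists (wrestr (mem (clause_syms p.1)) w), (wrestr (predC (mem (clause_syms p.1))) w).
split; first exact: consistent_factor up okp wc1.
by split; [apply: IH|apply: wrestr_split].
Qed.

Lemma lang_sub_delta_le (E E' : dime S) :
  (forall w, lang_dime E' w -> lang_dime E w) -> delta_le E' E.
Proof.
move=> sub; split; [|split; [|split]].
- by move=> a b Cab [w [/sub Ew ab]]; apply: Cab; exists w.
- by move=> a n [w [/sub Ew wa]]; exists w.
- by move=> X PX w /sub; apply: PX.
- by move=> a b Kab w /sub; apply: Kab.
Qed.

Lemma delta_le_consistent (E E' : dime S) w :
  delta_le E' E -> lang_dime E' w -> consistent (lang_dime E) w.
Proof.
move=> [leC [leN [leP leK]]] E'w; split.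
- by move=> a; apply: leN; exists w.
- by move=> a b /leC C'ab wab; apply: C'ab; exists w.
- by move=> X /leP; apply.
- by move=> a b /leK; apply.
Qed.

End DimeLanguages.

Theorem lemma2 (S : finType) (E E' : dime S) :
  is_dime E -> is_dime E' ->
  ((forall w, lang_dime E' w -> lang_dime E w) <-> delta_le E' E).
Proof.
move=> [_ [okE uE]] _; split; first exact: lang_sub_delta_le.
by move=> le w /(delta_le_consistent le); apply: consistent_dime.
Qed.
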